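(* Let $\mathcal{H}^S$ and $\mathcal{H}^A$ be $d$-dimensional Hilbert spaces with fixed orthonormal bases $\{|i\rangle\}_{i=0}^{d-1}$, let $|0\rangle^A$ be the first basis vector of $\mathcal{H}^A$, and equip $\mathcal{H}^S\otimes\mathcal{H}^A$ with the product basis. For every state $\rho^S$ on $\mathcal{H}^S$ and every incoherent operation $\Lambda^{SA}$ on $\mathcal{H}^S\otimes\mathcal{H}^A$, \[ \mathcal{L}_C(\rho^S)\ge\mathcal{L}_E\big(\Lambda^{SA}(\rho^S\otimes|0\rangle^A\langle 0|)\big). \]
   Context: A state is incoherent if it is diagonal in the fixed basis. An incoherent operation is a completely positive trace-preserving map $\Lambda(\rho)=\sum_nK_n\rho K_n^\dagger$ with $\sum_nK_n^\dagger K_n=I$ where each $K_n$ maps diagonal (incoherent) operators to diagonal operators under $\delta\mapsto K_n\delta K_n^\dagger$; for $\mathcal{H}^S\otimes\mathcal{H}^A$ the fixed basis is $\{|i\rangle\otimes|j\rangle\}$. The coherence rank $R_C(|\psi\rangle)$ of a pure state is the number of nonzero coefficients in the fixed basis; $\mathcal{L}_C(|\psi\rangle)=\log_2R_C(|\psi\rangle)$; for a state $\rho$, $\mathcal{L}_C(\rho)=\min\sum_ip_i\mathcal{L}_C(|\psi_i\rangle)$ over all pure-state decompositions $\rho=\sum_ip_i|\psi_i\rangle\langle\psi_i|$. For a bipartite pure state $|\psi^{SA}\rangle$ with Schmidt rank $r$, $\mathcal{L}_E(|\psi^{SA}\rangle)=\log_2 r$, and for a bipartite state $\rho^{SA}$,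 $\mathcal{L}_E(\rho^{SA})=\min\sum_ip_i\mathcal{L}_E(|\psi_i^{SA}\rangle)$ over all pure-state decompositions $\rho^{SA}=\sum_ip_i|\psi_i^{SA}\rangle\langle\psi_i^{SA}|$. *)

From HB Require Import structures.
From mathcomp Require Import all_boot all_order all_algebra.
From mathcomp Require Import complex mxtens.
From mathcomp Require Import classical_sets reals exp.
Set Implicit Arguments.
Unset Strict Implicit.
Unset Printing Implicit Defensive.
Import Order.TTheory GRing.Theory Num.Theory.
Local Open Scope ring_scope.
Local Open Scope complex_scope.

Section QDefs.
Variable R : realType.
Local Notation C := R[i].

Definition adjmx m n (A : 'M[C]_(m, n)) : 'M[C]_(n, m) :=
  (map_mx (fun z : C => z^*) A)^T.

Definition is_state n (rho : 'M[C]_n) : Prop :=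
  [/\ adjmx rho = rho,
      (forall x : 'cV[C]_n, 0 <= (adjmx x *m rho *m x) 0 0)
    & \tr rho = 1].

Definition unit_vec n (psi : 'cV[C]_n) : Prop := (adjmx psi *m psi) 0 0 = 1.

Definition proj n (psi : 'cV[C]_n) : 'M[C]_n := psi *m adjmx psi.

Definition pure_decomp n (rho : 'M[C]_n) k (p : 'I_k -> R)
  (psi : 'I_k -> 'cV[C]_n) : Prop :=
  [/\ forall i, 0 <= p i,
      \sum_(i < k) p i = 1,
      forall i, unit_vec (psi i)
    & rho = \sum_(i < k) (p i)%:C *: proj (psi i)].

Definition log2 (r : nat) : R := ln (r%:R) / ln 2.

Definition coh_rank n (psi : 'cV[C]_n) : nat := #|[set i | psi i 0 != 0]|.

Definition LC_pure n (psi : 'cV[C]_n) : R := log2 (coh_rank psi).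

Definition LC n (rho : 'M[C]_n) : R :=
  inf [set x : R | exists k (p : 'I_k -> R) (psi : 'I_k -> 'cV[C]_n),
         pure_decomp rho p psi /\ x = \sum_(i < k) p i * LC_pure (psi i)].

(* bipartite space H^S (dim m) (x) H^A (dim n), product basis |i>(x)|j>
   indexed by mxtens_index (i, j) (the index used by the Kronecker product *t). *)
Definition coef_mx m n (psi : 'cV[C]_(m * n)) : 'M[C]_(m, n) :=
  \matrix_(i, j) psi (mxtens_index (i, j)) 0.

Definition schmidt_rank m n (psi : 'cV[C]_(m * n)) : nat := \rank (coef_mx psi).

Definition LE_pure m n (psi : 'cV[C]_(m * n)) : R := log2 (schmidt_rank psi).

Definition LE m n (rho : 'M[C]_(m * n)) : R :=
  inf [set x : R | exists k (p : 'I_k -> R) (psi : 'I_k -> 'cV[C]_(m * n)),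
         pure_decomp rho p psi /\ x = \sum_(i < k) p i * LE_pure (psi i)].

Definition incoherent_op N k (K : 'I_k -> 'M[C]_N) : Prop :=
  (\sum_(i < k) adjmx (K i) *m K i = 1%:M) /\
  (forall i (delta : 'M[C]_N), is_diag_mx delta ->
      is_diag_mx (K i *m delta *m adjmx (K i))).

Definition apply_op N k (K : 'I_k -> 'M[C]_N) (rho : 'M[C]_N) : 'M[C]_N :=
  \sum_(i < k) K i *m rho *m adjmx (K i).

Definition ket0 d (hd : (0 < d)%N) : 'cV[C]_d := delta_mx (Ordinal hd) 0.

End QDefs.

From HB Require Import structures.
From mathcomp Require Import all_boot all_order all_algebra.
From mathcomp Require Import complex mxtens.
From mathcomp Require Import classical_sets reals exp.
From mathcomp Require Import sesquilinear spectral.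
From mathcomp Require Import ring.
Set Implicit Arguments.
Unset Strict Implicit.
Unset Printing Implicit Defensive.
Import Order.TTheory GRing.Theory Num.Theory.
Local Open Scope ring_scope.

(* Take a pure-state decomposition rho = sum_i p_i |psi_i><psi_i| and the
   Kraus operators K_n of Lambda.  Then Lambda(rho (x) |0><0|) is the sum of
   the rank-one terms |w_in><w_in| with w_in = sqrt p_i K_n (psi_i (x) |0>),
   whose squared norms add up to p_i over n.  An incoherent Kraus operator has
   at most one nonzero entry per column, so it cannot increase the coherence
   rank, and the Schmidt rank of a bipartite vector never exceeds its
   coherence rank.  Hence this decomposition of the output has
   L_E-average at most sum_i p_i L_C(psi_i); minimising over the
   decompositions of rho gives the claim. *)

Section CoherenceVsEntanglement.
Variable R : realType.
Local Notation C := R[i].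
Local Notation "x %:C" := (real_complex R x) (at level 1).

Lemma adjmxE m n (A : 'M[C]_(m, n)) i j : adjmx A i j = (A j i)^*.
Proof. by rewrite !mxE. Qed.

Lemma adjmxM m n p (A : 'M[C]_(m, n)) (B : 'M[C]_(n, p)) :
  adjmx (A *m B) = adjmx B *m adjmx A.
Proof.
apply/matrixP => i j; rewrite adjmxE !mxE rmorph_sum; apply: eq_bigr => l _.
by rewrite !adjmxE rmorphM mulrC.
Qed.

Lemma adjmxZ m n a (A : 'M[C]_(m, n)) : adjmx (a *: A) = a^* *: adjmx A.
Proof. by apply/matrixP => i j; rewrite !mxE rmorphM. Qed.

Lemma adjmx_conjT m n (A : 'M[C]_(m, n)) : adjmx A = (A ^t*)%sesqui.
Proof. by apply/matrixP => i j; rewrite !mxE. Qed.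

Lemma conjC_real_complex (x : R) : (x%:C)^* = x%:C.
Proof. exact: conjc_real. Qed.

Lemma projE n (v : 'cV[C]_n) i j : proj v i j = v i 0 * (v j 0)^*.
Proof. by rewrite /proj mxE big_ord1 adjmxE. Qed.

Lemma projZ n a (v : 'cV[C]_n) : proj (a *: v) = (a * a^*) *: proj v.
Proof. by rewrite /proj adjmxZ -scalemxAl -scalemxAr scalerA. Qed.

Lemma mulmx_proj n (A : 'M[C]_n) (v : 'cV[C]_n) :
  A *m proj v *m adjmx A = proj (A *m v).
Proof. by rewrite /proj adjmxM !mulmxA. Qed.

Definition sqnorm n (v : 'cV[C]_n) : C := (adjmx v *m v) 0 0.

Lemma sqnormE n (v : 'cV[C]_n) : sqnorm v = \sum_j (v j 0)^* * v j 0.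
Proof. by rewrite /sqnorm mxE; apply: eq_bigr => j _; rewrite adjmxE. Qed.

Lemma sqnorm_ge0 n (v : 'cV[C]_n) : 0 <= sqnorm v.
Proof. by rewrite sqnormE sumr_ge0 // => j _; rewrite mulrC mul_conjC_ge0. Qed.

Lemma sqnorm_eq0 n (v : 'cV[C]_n) : sqnorm v = 0 -> v = 0.
Proof.
rewrite sqnormE => /psumr_eq0P v0; apply/matrixP => j l; rewrite ord1 mxE.
apply/eqP; rewrite -mul_conjC_eq0 mulrC v0 // => i _.
by rewrite mulrC mul_conjC_ge0.
Qed.

Lemma sqnormZ n a (v : 'cV[C]_n) : sqnorm (a *: v) = a^* * a * sqnorm v.
Proof. by rewrite /sqnorm adjmxZ -scalemxAl -scalemxAr !mxE mulrA. Qed.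

Lemma unit_vec_ket0 d (hd : (0 < d)%N) : unit_vec (ket0 R hd).
Proof.
rewrite /unit_vec -/(sqnorm _) sqnormE (bigD1 (Ordinal hd)) //= big1.
  by rewrite !mxE !eqxx conjC1 mulr1 addr0.
by move=> j /negbTE nj; rewrite !mxE nj mulr0.
Qed.

Definition sqnormR n (v : 'cV[C]_n) : R := complex.Re (sqnorm v).

Lemma sqnormRE n (v : 'cV[C]_n) : (sqnormR v)%:C = sqnorm v.
Proof. by rewrite /sqnormR RRe_real // ger0_real // sqnorm_ge0. Qed.

Lemma sqnormR_ge0 n (v : 'cV[C]_n) : 0 <= sqnormR v.
Proof. by rewrite -lecR sqnormRE sqnorm_ge0. Qed.

Lemma sqnormR_scale_sqrt n (x : R) (v : 'cV[C]_n) : 0 <= x ->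
  sqnormR ((Num.sqrt x)%:C *: v) = x * sqnormR v.
Proof.
move=> x0; apply: (@complexI R).
rewrite sqnormRE sqnormZ rmorphM /= sqnormRE conjC_real_complex.
by rewrite -rmorphM -expr2 sqr_sqrtr.
Qed.

(* The zero vector is sent to [ket0], an arbitrary unit vector: it only ever
   occurs with weight [sqnormR v = 0]. *)
Definition normalized n (hn : (0 < n)%N) (v : 'cV[C]_n) : 'cV[C]_n :=
  if sqnormR v == 0 then ket0 R hn else ((Num.sqrt (sqnormR v))^-1)%:C *: v.

Lemma scale_invsqrt (x : R) : 0 < x ->
  ((Num.sqrt x)^-1)%:C^* * ((Num.sqrt x)^-1)%:C * x%:C = 1.
Proof.
move=> x0; rewrite conjC_real_complex -!rmorphM -expr2 exprVn sqr_sqrtr ?ltW //.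
by rewrite mulVf ?gt_eqF // rmorph1.
Qed.

Lemma sqnormR_gt0 n (v : 'cV[C]_n) : sqnormR v != 0 -> 0 < sqnormR v.
Proof. by rewrite lt_neqAle eq_sym sqnormR_ge0 andbT. Qed.

Lemma unit_vec_normalized n (hn : (0 < n)%N) (v : 'cV[C]_n) :
  unit_vec (normalized hn v).
Proof.
rewrite /normalized; case: ifP => [_|/negbT v0]; first exact: unit_vec_ket0.
rewrite /unit_vec -/(sqnorm _) sqnormZ -sqnormRE.
by rewrite scale_invsqrt // sqnormR_gt0.
Qed.

Lemma proj_normalized n (hn : (0 < n)%N) (v : 'cV[C]_n) :
  proj v = (sqnormR v)%:C *: proj (normalized hn v).
Proof.
rewrite /normalized; case: ifP => [/eqP v0|/negbT v0].
  rewrite v0 scale0r.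
  have -> : v = 0 by apply: sqnorm_eq0; rewrite -sqnormRE v0.
  by rewrite /proj mul0mx.
rewrite projZ scalerA mulrC [_ * _^*]mulrC scale_invsqrt ?scale1r //.
exact: sqnormR_gt0.
Qed.

Lemma pure_decomp_normalized n (hn : (0 < n)%N) k (w : 'I_k -> 'cV[C]_n) rho :
  rho = \sum_l proj (w l) -> \sum_l sqnormR (w l) = 1 ->
  pure_decomp rho (fun l => sqnormR (w l)) (fun l => normalized hn (w l)).
Proof.
move=> -> w1; split => // [i|i|]; first exact: sqnormR_ge0.
  exact: unit_vec_normalized.
by apply: eq_bigr => l _; rewrite -proj_normalized.
Qed.

Lemma log2_ge0 (a : nat) : 0 <= log2 R a.
Proof.
rewrite /log2; apply: divr_ge0; last by apply: ln_ge0; rewrite ler1n.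
by case: a => [|a]; [rewrite ln0 | apply: ln_ge0; rewrite ler1n].
Qed.

Lemma ler_log2 (a b : nat) : (a <= b)%N -> log2 R a <= log2 R b.
Proof.
move=> ab; rewrite /log2; apply: ler_wpM2r.
  by rewrite invr_ge0; apply: ln_ge0; rewrite ler1n.
case: a ab => [|a] ab; last first.
  by rewrite ler_ln ?posrE ?ltr0n ?ler_nat //; exact: leq_trans ab.
rewrite ln0 //; case: b ab => [|b] _; first by rewrite ln0.
by apply: ln_ge0; rewrite ler1n.
Qed.

Lemma coh_rankZ n c (v : 'cV[C]_n) : (coh_rank (c *: v) <= coh_rank v)%N.
Proof.
apply/subset_leq_card/fintype.subsetP => t.
by rewrite !inE mxE mulf_eq0 negb_or => /andP[].
Qed.

Lemma sqnormR_mul_LC_pure_normalized n (hn : (0 < n)%N) (v : 'cV[C]_n) :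
  sqnormR v * LC_pure (normalized hn v) <= sqnormR v * LC_pure v.
Proof.
rewrite /normalized; case: eqP => [->|_]; first by rewrite !mul0r.
by apply/ler_wpM2l/ler_log2/coh_rankZ; exact: sqnormR_ge0.
Qed.

Lemma coef_mx_delta_sum m n (w : 'cV[C]_(m * n)) :
  coef_mx w =
  \sum_t w t 0 *: delta_mx (mxtens_unindex t).1 (mxtens_unindex t).2.
Proof.
apply/matrixP => i j; rewrite summxE (bigD1 (mxtens_index (i, j))) // big1.
  by rewrite !mxE mxtens_indexK !eqxx mulr1 /= addr0.
move=> t; rewrite -(mxtens_unindexK t); case: (mxtens_unindex t) => a b.
rewrite (inj_eq (can_inj (@mxtens_indexK m n))) mxtens_indexK xpair_eqE.
by rewrite !mxE (eq_sym i) (eq_sym j) => /negbTE ->; rewrite mulr0.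
Qed.

Lemma schmidt_rank_le_coh_rank m n (w : 'cV[C]_(m * n)) :
  (schmidt_rank w <= coh_rank w)%N.
Proof.
rewrite /schmidt_rank /coh_rank coef_mx_delta_sum -sum1_card.
rewrite [X in (_ <= X)%N]big_mkcond /=.
elim/big_ind2: _ => [|r A s B rA sB|t _]; first by rewrite mxrank0.
  exact: leq_trans (mxrank_add A B) (leq_add rA sB).
rewrite inE; case: eqP => [->|_]; first by rewrite scale0r mxrank0.
by rewrite (leq_trans (mxrankS (scalemx_sub _ (submx_refl _)))) ?mxrank_delta.
Qed.

Lemma LE_pure_le_LC_pure m n (w : 'cV[C]_(m * n)) : LE_pure w <= LC_pure w.
Proof. exact/ler_log2/schmidt_rank_le_coh_rank. Qed.

(* Applied to the incoherent state |j><j|, incoherence of [K] forces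
   [K r j * (K s j)^* = 0] whenever [r != s]. *)
Lemma incoherent_kraus_col N (K : 'M[C]_N) :
  (forall delta : 'M[C]_N,
     is_diag_mx delta -> is_diag_mx (K *m delta *m adjmx K)) ->
  forall j r s, K r j != 0 -> K s j != 0 -> r = s.
Proof.
move=> incK j r s Krj Ksj; apply/eqP; apply: contraLR isT => rs.
have diag_j : is_diag_mx (proj (delta_mx j 0 : 'cV[C]_N)).
  apply/is_diag_mxP => a b ab; rewrite projE !mxE.
  case: (eqVneq a j) => [aj|_]; last by rewrite mul0r.
  case: (eqVneq b j) => [bj|_]; last by rewrite conjC0 mulr0.
  by move: ab; rewrite aj bj eqxx.
have /is_diag_mxP /(_ r s rs) := incK _ diag_j.
rewrite mulmx_proj -colE projE !mxE => /eqP.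
by rewrite mulf_eq0 conjC_eq0 (negbTE Krj) (negbTE Ksj).
Qed.

Lemma coh_rank_mulmx_col_unique N (K : 'M[C]_N) (v : 'cV[C]_N) :
  (forall j r s, K r j != 0 -> K s j != 0 -> r = s) ->
  (coh_rank (K *m v) <= coh_rank v)%N.
Proof.
move=> colK; rewrite /coh_rank.
pose g j := odflt j [pick r | K r j != 0].
suff sub : [set r | (K *m v) r 0 != 0] \subset g @: [set j | v j 0 != 0].
  exact: leq_trans (subset_leq_card sub) (leq_imset_card _ _).
apply/fintype.subsetP => r; rewrite inE mxE => Kv_r.
have [j] : exists j, K r j * v j 0 != 0.
  apply/existsP; apply: contraNT Kv_r => /existsPn Kv0.
  by apply/eqP/big1 => j _; apply/eqP/negPn/Kv0.
rewrite mulf_eq0 negb_or => /andP[Krj vj].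
apply/imsetP; exists j; first by rewrite inE.
rewrite /g; case: pickP => [r' Kr'j|/(_ r)]; first exact: colK Krj Kr'j.
by rewrite Krj.
Qed.

Definition tensv m n (a : 'cV[C]_m) (b : 'cV[C]_n) : 'cV[C]_(m * n) :=
  \col_t (a (mxtens_unindex t).1 0 * b (mxtens_unindex t).2 0).

Lemma coh_rank_tensv_ket0 d (hd : (0 < d)%N) (psi : 'cV[C]_d) :
  (coh_rank (tensv psi (ket0 R hd)) <= coh_rank psi)%N.
Proof.
rewrite /coh_rank.
suff sub : [set t | tensv psi (ket0 R hd) t 0 != 0] \subset
    (fun a => mxtens_index (a, Ordinal hd)) @: [set j | psi j 0 != 0].
  exact: leq_trans (subset_leq_card sub) (leq_imset_card _ _).
apply/fintype.subsetP => t; rewrite inE !mxE eqxx andbT mulf_eq0 negb_or.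
case/andP => psi_t.
case: (eqVneq (mxtens_unindex t).2 (Ordinal hd)) => [e0 _|_].
  apply/imsetP; exists (mxtens_unindex t).1; first by rewrite inE.
  by rewrite -e0 -surjective_pairing mxtens_unindexK.
by rewrite /= mulr0n eqxx.
Qed.

Lemma LC_pure_tensv_ket0 d (hd : (0 < d)%N) (psi : 'cV[C]_d) :
  LC_pure (tensv psi (ket0 R hd)) <= LC_pure psi.
Proof. exact/ler_log2/coh_rank_tensv_ket0. Qed.

Lemma sum_mxtens_index (V : nmodType) m n (F : 'I_(m * n) -> V) :
  \sum_t F t = \sum_(i < m) \sum_(j < n) F (mxtens_index (i, j)).
Proof.
rewrite pair_big /= (reindex (@mxtens_index m n)) /=.
  by apply: eq_bigr => -[].
exists (@mxtens_unindex m n) => t _; first exact: mxtens_indexK.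
exact: mxtens_unindexK.
Qed.

Lemma tensmx_proj m n (a : 'cV[C]_m) (b : 'cV[C]_n) :
  proj a *t proj b = proj (tensv a b).
Proof. by apply/matrixP => i j; rewrite mxE !projE !mxE rmorphM /=; ring. Qed.

Lemma tensmx_suml m n p q k (c : 'I_k -> C) (A : 'I_k -> 'M[C]_(m, n))
    (B : 'M[C]_(p, q)) :
  (\sum_i c i *: A i) *t B = \sum_i c i *: (A i *t B).
Proof.
apply/matrixP => i j; rewrite mxE !summxE mulr_suml; apply: eq_bigr => l _.
by rewrite !mxE mulrA.
Qed.

Lemma sqnorm_tensv m n (a : 'cV[C]_m) (b : 'cV[C]_n) :
  sqnorm (tensv a b) = sqnorm a * sqnorm b.
Proof.
rewrite !sqnormE mulr_suml sum_mxtens_index; apply: eq_bigr => i _.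
rewrite mulr_sumr; apply: eq_bigr => j _.
by rewrite !mxE mxtens_indexK /= rmorphM; ring.
Qed.

Lemma pure_decomp_tens_ket0 d (hd : (0 < d)%N) (rho : 'M[C]_d) k
    (p : 'I_k -> R) (psi : 'I_k -> 'cV[C]_d) :
  pure_decomp rho p psi ->
  pure_decomp (rho *t proj (ket0 R hd)) p (fun i => tensv (psi i) (ket0 R hd)).
Proof.
case=> p_ge0 p1 psi1 ->; split=> // [i|].
  have := psi1 i; rewrite /unit_vec -!/(sqnorm _) sqnorm_tensv => ->.
  by rewrite mul1r; exact: unit_vec_ket0.
by rewrite tensmx_suml; apply: eq_bigr => i _; rewrite tensmx_proj.
Qed.

Lemma sum_sqnormR_kraus N k (K : 'I_k -> 'M[C]_N) (v : 'cV[C]_N) :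
  \sum_(n < k) adjmx (K n) *m K n = 1%:M -> unit_vec v ->
  \sum_n sqnormR (K n *m v) = 1.
Proof.
move=> kraus v1; apply: (@complexI R); rewrite rmorph_sum /= rmorph1.
under eq_bigr do rewrite sqnormRE /sqnorm adjmxM mulmxA -(mulmxA (adjmx v)).
by rewrite -summxE -mulmx_suml -mulmx_sumr kraus mulmx1.
Qed.

Lemma apply_op_mix N k l (K : 'I_k -> 'M[C]_N) (c : 'I_l -> C)
    (v : 'I_l -> 'cV[C]_N) :
  apply_op K (\sum_(i < l) c i *: proj (v i)) =
  \sum_(i < l) \sum_(n < k) c i *: proj (K n *m v i).
Proof.
rewrite /apply_op exchange_big /=; apply: eq_bigr => n _.
rewrite mulmx_sumr mulmx_suml; apply: eq_bigr => i _.
by rewrite -scalemxAr -scalemxAl mulmx_proj.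
Qed.

(* The eigenvectors of [rho] are the conjugated rows of the unitary [P]
   diagonalising it, and its eigenvalues are the weights. *)
Lemma state_pure_decomp d (rho : 'M[C]_d) : is_state rho ->
  exists k (p : 'I_k -> R) (psi : 'I_k -> 'cV[C]_d), pure_decomp rho p psi.
Proof.
case=> herm psd tr1.
have /orthomx_spectralP rhoE : rho \is normalmx.
  by apply/normalmxP; rewrite -adjmx_conjT herm.
set P := spectralmx rho in rhoE; set sp := spectral_diag rho in rhoE.
have PU : P *m adjmx P = 1%:M.
  by rewrite adjmx_conjT; apply/unitarymxP/spectral_unitarymx.
have {}rhoE : rho = adjmx P *m diag_mx sp *m P.
  by rewrite {1}rhoE invmx_unitary ?spectral_unitarymx // adjmx_conjT.
pose v (j : 'I_d) : 'cV[C]_d := \col_a (P j a)^*.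
have adjv j : adjmx (v j) = row j P.
  by apply/matrixP => a b; rewrite adjmxE !mxE conjCK.
have spE j : sp 0 j = (adjmx (v j) *m rho *m v j) 0 0.
  have spPP : diag_mx sp = P *m rho *m adjmx P.
    by rewrite rhoE !mulmxA PU mul1mx -mulmxA PU mulmx1.
  have /= := congr1 (fun A : 'M[C]_d => A j j) spPP.
  rewrite [in LHS]mxE eqxx mulr1n => ->; rewrite adjv !mxE.
  apply: eq_bigr => b _; rewrite adjmxE !mxE; congr (_ * _).
  by apply: eq_bigr => a _; rewrite !mxE.
pose p j := complex.Re (sp 0 j).
have pE j : (p j)%:C = sp 0 j by rewrite /p RRe_real // ger0_real // spE psd.
exists d, p, v; split => [j|||].
- by rewrite -lecR pE spE psd.
- apply: (@complexI R); rewrite rmorph_sum /= rmorph1.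
  under eq_bigr do rewrite pE.
  by rewrite -mxtrace_diag -tr1 rhoE mxtrace_mulC mulmxA PU mul1mx.
- move=> j; rewrite /unit_vec adjv !mxE.
  have /= := congr1 (fun A : 'M[C]_d => A j j) PU.
  rewrite [in RHS]mxE eqxx mulr1n => <-; rewrite mxE.
  by apply: eq_bigr => a _; rewrite !mxE.
- apply/matrixP => a b; rewrite {1}rhoE mul_mx_diag mxE summxE.
  apply: eq_bigr => j _; rewrite mxE [in RHS]mxE projE pE adjmxE !mxE conjCK.
  ring.
Qed.

Definition convex_roof n (f : 'cV[C]_n -> R) (rho : 'M[C]_n) : R :=
  inf [set x : R | exists k (p : 'I_k -> R) (psi : 'I_k -> 'cV[C]_n),
         pure_decomp rho p psi /\ x = \sum_(i < k) p i * f (psi i)].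

Lemma LCE n (rho : 'M[C]_n) : LC rho = convex_roof (@LC_pure R n) rho.
Proof. by []. Qed.

Lemma LEE m n (rho : 'M[C]_(m * n)) : LE rho = convex_roof (@LE_pure R m n) rho.
Proof. by []. Qed.

Lemma convex_roof_le n (f : 'cV[C]_n -> R) rho k (p : 'I_k -> R) psi :
  (forall v, 0 <= f v) -> pure_decomp rho p psi ->
  convex_roof f rho <= \sum_(i < k) p i * f (psi i).
Proof.
move=> f_ge0 dec; apply: ge_inf; last by exists k, p, psi.
exists 0 => _ [l [q [phi [[q_ge0 _ _ _] ->]]]].
by apply: sumr_ge0 => i _; apply: mulr_ge0.
Qed.

Lemma convex_roof_ge n (f : 'cV[C]_n -> R) rho c :
  (exists k (p : 'I_k -> R) psi, pure_decomp rho p psi) ->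
  (forall k (p : 'I_k -> R) psi, pure_decomp rho p psi ->
     c <= \sum_(i < k) p i * f (psi i)) ->
  c <= convex_roof f rho.
Proof.
move=> [k [p [psi dec]]] lb; apply: lb_le_inf.
  by exists (\sum_(i < k) p i * f (psi i)), k, p, psi.
by move=> _ [l [q [phi [decq ->]]]]; exact: lb.
Qed.

Lemma incoherent_pure_decomp N (hN : (0 < N)%N) k (K : 'I_k -> 'M[C]_N)
    (sigma : 'M[C]_N) l (p : 'I_l -> R) (u : 'I_l -> 'cV[C]_N) :
  incoherent_op K -> pure_decomp sigma p u ->
  exists m (q : 'I_m -> R) (w : 'I_m -> 'cV[C]_N),
    pure_decomp (apply_op K sigma) q w /\
    \sum_(t < m) q t * LC_pure (w t) <= \sum_(i < l) p i * LC_pure (u i).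
Proof.
case=> kraus incK [p_ge0 p1 u1 sigmaE].
pose W i n : 'cV[C]_N := (Num.sqrt (p i))%:C *: (K n *m u i).
pose Wt (t : 'I_(l * k)) := W (mxtens_unindex t).1 (mxtens_unindex t).2.
have sqnormW i : \sum_n sqnormR (W i n) = p i.
  under eq_bigr do rewrite sqnormR_scale_sqrt //.
  by rewrite -mulr_sumr sum_sqnormR_kraus // mulr1.
have sigmaW : apply_op K sigma = \sum_t proj (Wt t).
  rewrite sigmaE apply_op_mix sum_mxtens_index.
  apply: eq_bigr => i _; apply: eq_bigr => n _; rewrite /Wt mxtens_indexK.
  by rewrite projZ conjC_real_complex -rmorphM -expr2 sqr_sqrtr.
have sumW : \sum_t sqnormR (Wt t) = 1.
  rewrite sum_mxtens_index -p1; apply: eq_bigr => i _; rewrite -sqnormW.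
  by apply: eq_bigr => n _; rewrite /Wt mxtens_indexK.
exists (l * k)%N, (fun t => sqnormR (Wt t)), (fun t => normalized hN (Wt t)).
split; first exact: pure_decomp_normalized.
rewrite sum_mxtens_index; apply: ler_sum => i _.
rewrite -sqnormW mulr_suml; apply: ler_sum => n _; rewrite /Wt mxtens_indexK.
apply: le_trans (sqnormR_mul_LC_pure_normalized _ _) _.
apply/ler_wpM2l/ler_log2; first exact: sqnormR_ge0.
apply: leq_trans (coh_rankZ _ _) _.
exact/coh_rank_mulmx_col_unique/incoherent_kraus_col/incK.
Qed.

End CoherenceVsEntanglement.

Theorem proposition5 (R : realType) (d : nat) (hd : (0 < d)%N)
  (rho : 'M[R[i]]_d) (k : nat) (K : 'I_k -> 'M[R[i]]_(d * d)) :
  is_state rho -> incoherent_op K ->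
  LE (apply_op K (rho *t proj (ket0 R hd))) <= LC rho.
Proof.
move=> st incK; rewrite LEE LCE.
have hN : (0 < d * d)%N by rewrite muln_gt0 hd.
apply: convex_roof_ge (state_pure_decomp st) _ => l p psi dec.
have [m [q [w [decw LC_qw]]]] :=
  incoherent_pure_decomp hN incK (pure_decomp_tens_ket0 hd dec).
have [[q_ge0 _ _ _] [p_ge0 _ _ _]] := (decw, dec).
apply: le_trans (convex_roof_le (fun _ => log2_ge0 _ _) decw) _.
apply: le_trans (le_trans _ LC_qw) _.
  by apply: ler_sum => t _; apply/ler_wpM2l/LE_pure_le_LC_pure.
by apply: ler_sum => i _; apply/ler_wpM2l/LC_pure_tensv_ket0.
Qed.
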